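(* In the category $\mathbf{FCLS}$ of finite closure spaces, every descent morphism is an effective descent morphism.
   Context: A closure space is a pair $(A,\mathcal{C}_A)$ where $A$ is a set and $\mathcal{C}_A$ is a set of subsets of $A$ closed under arbitrary intersections (so $A\in\mathcal{C}_A$). $\mathbf{CLS}$ has closure spaces as objects and, as morphisms $\alpha:A\to B$, maps with $\alpha^{-1}(B')\in\mathcal{C}_A$ for all $B'\in\mathcal{C}_B$; $\mathbf{FCLS}$ is its full subcategory of closure spaces with finite underlying set (it has pullbacks and coequalizers of equivalence relations). For a morphism $p:E\to B$ in a category $\mathbf{C}$ with pullbacks, a descent data for $p$ is a triple $(C,\gamma,\xi)$ with $\gamma:C\to E$, $\xi:E\times_BC\to C$ (pullback of $p$ and $p\gamma$, projections $\pi_1,\pi_2$) such that $\gamma\xi=\pi_1$, $\xi\langle\gamma,1_C\rangle=1_C$, $\xi\circ(E\times_B\xi)=\xi\circ(E\times_B\pi_2)$; a morphism $(C,\gamma,\xi)\to(C',\gamma',\xi')$ is $f:C\to C'$ with $\gamma'f=\gamma$ and $f\xi=\xi'\circ(E\times_Bf)$. This gives a category $\mathrm{Des}(p)$ and a comparison functor $K^p:(\mathbf{C}\downarrow B)\to\mathrm{Des}(p)$, $K^p(A,\alpha)=(E\times_BA,\pi_1,E\times_B\pi_2)$. The morphism $p$ is a descent morphism if $K^p$ is fully faithful (equivalently, $p$ is a pullback-stable regular epimorphism), and an effective descent morphism if $K^p$ is an equivalence of categories. *)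

From mathcomp Require Import all_boot.
Set Implicit Arguments.
Unset Strict Implicit.
Unset Printing Implicit Defensive.

(* Finite closure spaces: a finite set A with a family of subsets closed
   under arbitrary intersections (the empty intersection being A).     *)
Record fcls := FCLS {
  carrier :> finType;
  closed : {set {set carrier}};
  closedP : forall F : {set {set carrier}},
      F \subset closed -> \bigcap_(X in F) X \in closed }.

Definition cont (A B : fcls) (f : A -> B) : Prop :=
  forall Y, Y \in closed B -> f @^-1: Y \in closed A.

Definition gen_closed (T : finType) (gens : {set {set T}}) : {set {set T}} :=
  [set S : {set T} | S == \bigcap_(X in gens | S \subset X) X].

Lemma gen_closedP (T : finType) (gens : {set {set T}}) (F : {set {set T}}) :
  F \subset gen_closed gens -> \bigcap_(X in F) X \in gen_closed gens.
Proof.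
move=> /subsetP sF; rewrite inE eqEsubset; apply/andP; split.
  by apply/bigcapsP => X /andP [_ ?].
apply/subsetP => x /bigcapP xG; apply/bigcapP => S SF.
have := sF S SF; rewrite inE => /eqP ->; apply/bigcapP => X /andP [Xg SX].
apply: xG; rewrite Xg /=; apply: subset_trans SX; exact: bigcap_inf.
Qed.

Definition gen_fcls (T : finType) (gens : {set {set T}}) : fcls :=
  @FCLS T (gen_closed gens) (@gen_closedP T gens).

Lemma gen_closed_gens (T : finType) (gens : {set {set T}}) X :
  X \in gens -> X \in closed (gen_fcls gens).
Proof.
move=> Xg; rewrite /= inE eqEsubset; apply/andP; split.
  by apply/bigcapsP => Y /andP [_ ?].
by apply: bigcap_inf; rewrite Xg subxx.
Qed.

Lemma cont_gen (A : fcls) (T : finType) (gens : {set {set T}}) (f : A -> T) :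
  (forall X, X \in gens -> f @^-1: X \in closed A) ->
  @cont A (gen_fcls gens) f.
Proof.
move=> hg S; rewrite /= inE => /eqP ->.
set G := [set X in gens | S \subset X].
have -> : f @^-1: (\bigcap_(X in gens | S \subset X) X)
        = \bigcap_(Y in ((fun X : {set T} => f @^-1: X) @: G)) Y.
  apply/setP => a; rewrite inE; apply/bigcapP/bigcapP.
    move=> h Y /imsetP [X XG ->]; rewrite inE; apply: h.
    by move: XG; rewrite inE.
  move=> h X XgS; have := h (f @^-1: X); rewrite inE; apply.
  by apply/imsetP; exists X; rewrite // inE.
apply: closedP; apply/subsetP => Y /imsetP [X]; rewrite inE => /andP [Xg _] ->.
exact: hg.
Qed.

(* Pullbacks in FCLS: underlying set is the set-theoretic pullback, with
   the initial closure structure w.r.t. the two projections (generated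
   by preimages of closed sets under the projections).                *)
Section Pullback.
Variables (E B : fcls) (p : E -> B).

Definition pb_type (C : fcls) (q : C -> B) : finType :=
  {x : E * C | p x.1 == q x.2}.

Definition pb_gens (C : fcls) (q : C -> B) : {set {set pb_type q}} :=
  ((fun X : {set E} => [set z : pb_type q | (val z).1 \in X]) @: closed E) :|:
  ((fun Y : {set C} => [set z : pb_type q | (val z).2 \in Y]) @: closed C).

Definition pb (C : fcls) (q : C -> B) : fcls := gen_fcls (pb_gens q).

Definition pi1 (C : fcls) (q : C -> B) (z : pb q) : E := (val z).1.
Definition pi2 (C : fcls) (q : C -> B) (z : pb q) : C := (val z).2.

Lemma pi1_cont (C : fcls) (q : C -> B) : cont (@pi1 C q).
Proof.
move=> X XE; apply: gen_closed_gens; apply/setUP; left.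
by apply/imsetP; exists X => //; apply/setP => z; rewrite !inE.
Qed.

Lemma pi2_cont (C : fcls) (q : C -> B) : cont (@pi2 C q).
Proof.
move=> Y YC; apply: gen_closed_gens; apply/setUP; right.
by apply/imsetP; exists Y => //; apply/setP => z; rewrite !inE.
Qed.

Lemma pbP (C : fcls) (q : C -> B) (z : pb q) : q (pi2 z) = p (pi1 z).
Proof. by rewrite /pi1 /pi2; case: z => [[e c] /= /eqP ->]. Qed.

Definition pbmap (X Y : fcls) (qX : X -> B) (qY : Y -> B) (f : X -> Y)
    (hf : forall x, qY (f x) = qX x) (z : pb qX) : pb qY.
Proof.
refine (exist _ ((val z).1, f (val z).2) _).
by rewrite /= hf; exact: (valP z).
Defined.

Lemma pbmap_val (X Y : fcls) (qX : X -> B) (qY : Y -> B) (f : X -> Y)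
    (hf : forall x, qY (f x) = qX x) (z : pb qX) :
  val (pbmap hf z) = ((val z).1, f (val z).2).
Proof. by []. Qed.

Lemma pbmap_cont (X Y : fcls) (qX : X -> B) (qY : Y -> B) (f : X -> Y)
    (hf : forall x, qY (f x) = qX x) :
  cont f -> cont (pbmap hf).
Proof.
move=> fc; apply: cont_gen => G /setUP [] /imsetP [Z ZC ->].
  apply: gen_closed_gens; apply/setUP; left; apply/imsetP; exists Z => //.
  by apply/setP => z; rewrite !inE.
apply: gen_closed_gens; apply/setUP; right; apply/imsetP.
exists (f @^-1: Z); first exact: fc.
by apply/setP => z; rewrite !inE.
Qed.

End Pullback.

Section Descent.
Variables (E B : fcls) (p : E -> B).

Record sobj := SObj {
  sdom :> fcls;
  smap : sdom -> B;
  smap_cont : cont smap }.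

Record shom (X Y : sobj) := SHom {
  shfun :> X -> Y;
  shcont : cont shfun;
  shcomm : forall x, @smap Y (shfun x) = @smap X x }.

Definition pbB (C : fcls) (q : C -> B) (z : pb p q) : B := p (pi1 z).

Record dobj := DObj {
  dC :> fcls;
  dgamma : dC -> E;
  dgamma_cont : cont dgamma;
  dxi : pb p (p \o dgamma) -> dC;
  dxi_cont : cont dxi;
  dlaw1 : forall z, dgamma (dxi z) = pi1 z;
  dlaw2 : forall c : dC,
      dxi (exist _ (dgamma c, c) (eqxx (p (dgamma c)))) = c;
  dlaw3 : forall y : pb p (@pbB _ (p \o dgamma)),
      dxi (pbmap (qY := p \o dgamma) (f := dxi)
             (fun z => f_equal p (dlaw1 z)) y)
      = dxi (pbmap (qY := p \o dgamma) (f := @pi2 _ _ p _ (p \o dgamma))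
             (@pbP _ _ p _ (p \o dgamma)) y) }.

Record dhom (D D' : dobj) := DHom {
  dhfun :> D -> D';
  dhcont : cont dhfun;
  dhgamma : forall c, @dgamma D' (dhfun c) = @dgamma D c;
  dhxi : forall z, dhfun (dxi z)
      = dxi (pbmap (qX := p \o @dgamma D) (qY := p \o @dgamma D') (f := dhfun)
               (fun c => f_equal p (dhgamma c)) z) }.

Definition K0_xi (X : sobj) :
    pb p (p \o (@pi1 _ _ p _ (@smap X))) -> pb p (@smap X) :=
  pbmap (qY := @smap X) (f := @pi2 _ _ p _ (@smap X)) (@pbP _ _ p _ (@smap X)).

Lemma K0_law1 (X : sobj) (z : pb p (p \o (@pi1 _ _ p _ (@smap X)))) :
  pi1 (@K0_xi X z) = pi1 z.
Proof. by []. Qed.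

Lemma K0_law2 (X : sobj) (c : pb p (@smap X)) :
  K0_xi (exist _ (pi1 c, c) (eqxx (p (pi1 c)))) = c.
Proof. by apply: val_inj; case: c => [[e a] h]. Qed.

Lemma K0_law3 (X : sobj) (y : pb p (@pbB _ (p \o (@pi1 _ _ p _ (@smap X))))) :
  K0_xi (pbmap (qY := p \o (@pi1 _ _ p _ (@smap X))) (f := @K0_xi X)
          (fun z => f_equal p (K0_law1 z)) y)
  = K0_xi (pbmap (qY := p \o (@pi1 _ _ p _ (@smap X)))
          (f := @pi2 _ _ p _ (p \o (@pi1 _ _ p _ (@smap X))))
          (@pbP _ _ p _ (p \o (@pi1 _ _ p _ (@smap X)))) y).
Proof. by apply: val_inj. Qed.

Definition K0 (X : sobj) : dobj :=
  @DObj (pb p (@smap X)) (@pi1 _ _ p _ (@smap X)) (@pi1_cont _ _ p _ (@smap X))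
    (@K0_xi X) (pbmap_cont _ (@pi2_cont _ _ p _ (@smap X))) (@K0_law1 X) (@K0_law2 X) (@K0_law3 X).

Definition K1_fun (X Y : sobj) (f : shom X Y) : K0 X -> K0 Y :=
  pbmap (qX := @smap X) (qY := @smap Y) (f := f) (@shcomm X Y f).

Lemma K1_gamma (X Y : sobj) (f : shom X Y) (c : K0 X) :
  @dgamma (K0 Y) (K1_fun f c) = @dgamma (K0 X) c.
Proof. by []. Qed.

Lemma K1_xi (X Y : sobj) (f : shom X Y) z :
  K1_fun f (@dxi (K0 X) z)
  = @dxi (K0 Y) (pbmap (qX := p \o @dgamma (K0 X)) (qY := p \o @dgamma (K0 Y))
                  (f := K1_fun f) (fun c => f_equal p (K1_gamma f c)) z).
Proof. by apply: val_inj. Qed.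

Definition K1 (X Y : sobj) (f : shom X Y) : dhom (K0 X) (K0 Y) :=
  @DHom (K0 X) (K0 Y) (K1_fun f) (pbmap_cont _ (@shcont X Y f))
    (@K1_gamma X Y f) (@K1_xi X Y f).

(* K^p is fully faithful: bijective on hom-sets (morphisms in FCLS are
   determined by their underlying maps, so equality = pointwise equality) *)
Definition K_fully_faithful : Prop :=
  (forall (X Y : sobj) (f g : shom X Y),
      (forall z, K1 f z = K1 g z) -> forall x, f x = g x) /\
  (forall (X Y : sobj) (h : dhom (K0 X) (K0 Y)),
      exists f : shom X Y, forall z, K1 f z = h z).

(* K^p is an equivalence of categories: there is a functor
   G : Des(p) -> (FCLS | B) with natural isomorphisms 1 ~= G K^p and
   K^p G ~= 1.  Identities and composites are expressed through pointwise
   equality of underlying maps. *)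
Definition K_equivalence : Prop :=
  exists (G0 : dobj -> sobj) (G1 : forall D D', dhom D D' -> shom (G0 D) (G0 D')),
    (forall (D : dobj) (h : dhom D D), (forall x, h x = x) ->
        forall y, G1 D D h y = y) /\
    (forall (D1 D2 D3 : dobj) (h : dhom D2 D3) (k : dhom D1 D2) (hk : dhom D1 D3),
        (forall x, hk x = h (k x)) ->
        forall y, G1 _ _ hk y = G1 _ _ h (G1 _ _ k y)) /\
    (exists (eta : forall X, shom X (G0 (K0 X)))
            (eta' : forall X, shom (G0 (K0 X)) X),
        (forall X x, eta' X (eta X x) = x) /\
        (forall X y, eta X (eta' X y) = y) /\
        (forall (X Y : sobj) (f : shom X Y) x,
            eta Y (f x) = G1 _ _ (K1 f) (eta X x))) /\
    (exists (eps : forall D, dhom (K0 (G0 D)) D)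
            (eps' : forall D, dhom D (K0 (G0 D))),
        (forall D x, eps' D (eps D x) = x) /\
        (forall D y, eps D (eps' D y) = y) /\
        (forall (D D' : dobj) (h : dhom D D') z,
            eps D' (K1 (G1 _ _ h) z) = h (eps D z))).

End Descent.

Definition descent_morphism (E B : fcls) (p : E -> B) : Prop :=
  cont p /\ K_fully_faithful p.

Definition effective_descent_morphism (E B : fcls) (p : E -> B) : Prop :=
  cont p /\ K_equivalence p.

From HB Require Import structures.
From mathcomp Require Import all_boot generic_quotient.
From Stdlib Require Import ClassicalEpsilon.

Set Implicit Arguments.
Unset Strict Implicit.
Unset Printing Implicit Defensive.

Local Open Scope quotient_scope.

(* A descent datum (C, gamma, xi) for p is an action of the equivalence relation
   E x_B E on C.  Let A be its orbit space, with the final closure structure along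
   C -> A; it lies over B, and (e, [c]) |-> xi (e, c) is a bijection E x_B A -> C
   compatible with the descent structures, with a continuous inverse.  It is itself
   continuous because every closed Z of C is cut out of a saturated closed K by the
   closed set gamma^-1 (cl (gamma Z)); the existence of K follows from the continuity
   of xi by a maximality argument.  So K^p is essentially surjective for every p, and
   a fully faithful, essentially surjective functor is an equivalence. *)

Section ClosureSpace.
Variable A : fcls.

Lemma bigcap_closed (I : finType) (P : {pred I}) (F : I -> {set A}) :
  {in P, forall i, F i \in closed A} -> \bigcap_(i in P) F i \in closed A.
Proof.
move=> FP; rewrite -(big_imset_idem F P id (@setIid _)).
by apply: closedP; apply/subsetP => _ /imsetP [i iP ->]; apply: FP.
Qed.

Lemma closedI (X Y : {set A}) :
  X \in closed A -> Y \in closed A -> X :&: Y \in closed A.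
Proof.
move=> XC YC; have := @bigcap_closed bool predT (fun b => if b then X else Y).
by rewrite big_bool /=; apply=> -[].
Qed.

Definition hull (S : {set A}) : {set A} :=
  \bigcap_(X in [set X in closed A | S \subset X]) X.

Lemma hull_closed (S : {set A}) : hull S \in closed A.
Proof. by apply: closedP; apply/subsetP => X; rewrite inE => /andP []. Qed.

Lemma sub_hull (S : {set A}) : S \subset hull S.
Proof. by apply/bigcapsP => X; rewrite inE => /andP []. Qed.

Lemma hull_min (S X : {set A}) : X \in closed A -> S \subset X -> hull S \subset X.
Proof. by move=> XC SX; apply: bigcap_inf; rewrite inE XC. Qed.

End ClosureSpace.

Lemma cont_id (A : fcls) : cont (@id A).
Proof. by move=> Y YC; rewrite (_ : id @^-1: Y = Y) //; apply/setP => x; rewrite inE. Qed.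

Lemma cont_comp (A1 A2 A3 : fcls) (f : A2 -> A3) (h : A1 -> A2) :
  cont f -> cont h -> cont (f \o h).
Proof.
move=> fC hC Y YC; rewrite (_ : _ @^-1: Y = h @^-1: (f @^-1: Y)); first exact/hC/fC.
by apply/setP => x; rewrite !inE.
Qed.

Section FinalStructure.
Variables (A : fcls) (T : finType) (f : A -> T).

Definition final_closed : {set {set T}} := [set Y : {set T} | f @^-1: Y \in closed A].

Lemma final_closedP (F : {set {set T}}) :
  F \subset final_closed -> \bigcap_(Y in F) Y \in final_closed.
Proof.
move=> /subsetP sF; rewrite inE (big_morph _ (preimsetI f) (preimsetT f)).
by apply: bigcap_closed => Y /sF; rewrite inE.
Qed.

Definition final_fcls : fcls := FCLS final_closedP.

End FinalStructure.

Lemma gen_closed_sep (T : finType) (gens : {set {set T}}) (M : {set T}) u :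
  M \in gen_closed gens ->
  (forall G, G \in gens -> M \subset G -> u \in G) -> u \in M.
Proof. by rewrite inE => /eqP {2}-> sepM; apply/bigcapP => G /andP []; apply: sepM. Qed.

Section PullbackClosedSets.
Variables (E B C : fcls) (p : E -> B) (q : C -> B).

Lemma pb_gensP (G : {set pb_type p q}) :
  G \in pb_gens p q ->
  (exists2 X, X \in closed E & G = [set z : pb_type p q | (val z).1 \in X]) \/
  (exists2 Y, Y \in closed C & G = [set z : pb_type p q | (val z).2 \in Y]).
Proof. by case/setUP => /imsetP [X XC ->]; [left | right]; exists X. Qed.

Lemma pb_rect_closed (X : {set E}) (Y : {set C}) :
  X \in closed E -> Y \in closed C ->
  (@pi1 _ _ p _ q) @^-1: X :&: (@pi2 _ _ p _ q) @^-1: Y \in closed (pb p q).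
Proof. by move=> XC YC; apply: closedI; [apply: pi1_cont | apply: pi2_cont]. Qed.

End PullbackClosedSets.

Section DescentDatum.
Variables (E B : fcls) (p : E -> B) (D : dobj p).

Local Notation g := (@dgamma _ _ p D).
Local Notation xi := (@dxi _ _ p D).
Local Notation Q := (pb_type p (p \o g)).

(* [xi] uncurried and made total: outside the pullback, [act e c] is the junk value [c]. *)
Definition act (e : E) (c : D) : D :=
  if @insub _ _ Q (e, c) is Some z then xi z else c.

Lemma act_pb e c (h : p e == p (g c)) : act e c = xi (exist _ (e, c) h : Q).
Proof. by rewrite /act insubT. Qed.

Lemma actE (z : Q) : act (val z).1 (val z).2 = xi z.
Proof. by case: z => [[e c] h]; rewrite (act_pb h). Qed.

Lemma dgamma_act e c : p e = p (g c) -> g (act e c) = e.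
Proof. by move/eqP=> h; rewrite (act_pb h) dlaw1. Qed.

Lemma act_dgamma c : act (g c) c = c.
Proof. by rewrite (act_pb (eqxx _)) dlaw2. Qed.

Lemma act_act e e' c :
  p e = p e' -> p e' = p (g c) -> act e (act e' c) = act e c.
Proof.
move=> ee' /eqP e'c; set z : Q := exist _ (e', c) e'c.
have ez : p e == @pbB _ _ p _ (p \o g) z by apply/eqP.
have := dlaw3 (exist _ (e, z) ez : pb_type p (@pbB _ _ p _ (p \o g))).
by rewrite -!actE /= (act_pb e'c).
Qed.

Definition dorbit (c c' : D) : bool :=
  (p (g c) == p (g c')) && (act (g c') c == c').

Lemma dorbit_refl : reflexive dorbit.
Proof. by move=> c; rewrite /dorbit eqxx act_dgamma eqxx. Qed.

Lemma dorbit_symI c c' : dorbit c c' -> dorbit c' c.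
Proof.
case/andP=> /eqP cc' /eqP actc; rewrite /dorbit eq_sym cc' eqxx /=.
by rewrite -{1}actc act_act ?act_dgamma.
Qed.

Lemma dorbit_sym : symmetric dorbit.
Proof. by move=> c c'; apply/idP/idP; apply: dorbit_symI. Qed.

Lemma dorbit_trans : transitive dorbit.
Proof.
move=> c' c c'' /andP [/eqP cc' /eqP actc] /andP [/eqP cc'' /eqP actc'].
rewrite /dorbit cc' cc'' eqxx -(act_act (esym cc'') (esym cc')).
by rewrite actc actc' eqxx.
Qed.

Lemma dorbit_act e c : p e = p (g c) -> dorbit c (act e c).
Proof. by move=> ec; rewrite /dorbit dgamma_act // ec !eqxx. Qed.

Definition dorbit_equiv := EquivRel dorbit dorbit_refl dorbit_sym dorbit_trans.

Definition orbits := {eq_quot dorbit_equiv}.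
HB.instance Definition _ := [Finite of orbits by <:%/].

Definition orbit_of : D -> orbits := \pi_orbits.

Lemma orbit_ofP c c' : reflect (orbit_of c = orbit_of c') (dorbit c c').
Proof. exact: (@eqquotP _ _ orbits). Qed.

Lemma orbit_of_repr (a : orbits) : orbit_of (repr a) = a.
Proof. exact: reprK. Qed.

Definition orbit_space : fcls := final_fcls orbit_of.

Lemma dorbit_repr c : dorbit (repr (orbit_of c)) c.
Proof. by apply/orbit_ofP; rewrite orbit_of_repr. Qed.

Definition orbit_map (a : orbit_space) : B := p (g (repr a)).

Lemma orbit_map_of c : orbit_map (orbit_of c) = p (g c).
Proof. by have /andP [/eqP] := dorbit_repr c. Qed.

Definition saturation (K : {set D}) : {set D} :=
  orbit_of @^-1: (orbit_of @: K).

Lemma sub_saturation (K : {set D}) : K \subset saturation K.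
Proof. by apply/subsetP => c cK; rewrite inE imset_f. Qed.

Lemma act_mem_closed (K : {set D}) c e :
  K \in closed D -> c \in hull (saturation K) -> e \in hull (g @: K) ->
  p e = p (g c) -> act e c \in K.
Proof.
move=> KC cK eK /eqP ec; rewrite (act_pb ec).
suff : (exist _ (e, c) ec : Q) \in xi @^-1: K by rewrite inE.
apply: (gen_closed_sep (dxi_cont KC)) => G /pb_gensP [[X XC ->] | [W WC ->]] sG;
  rewrite inE /=.
  apply: (subsetP (hull_min XC _)) eK; apply/subsetP => _ /imsetP [k kK ->].
  by have := subsetP sG (exist _ (g k, k) (eqxx _) : Q); rewrite !inE /= dlaw2; apply.
apply: (subsetP (hull_min WC _)) cK; apply/subsetP => c0; rewrite inE.
case/imsetP => k kK /orbit_ofP/andP [/eqP c0k /eqP actk].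
have kc0' : p (g k) == p (g c0) by rewrite c0k.
have := subsetP sG (exist _ (g k, c0) kc0' : Q).
by rewrite !inE /= -(act_pb kc0') actk; apply.
Qed.

Lemma saturated_extension (Z : {set D}) : Z \in closed D ->
  exists K : {set D}, [/\ K \in closed D, saturation K \subset K, Z \subset K
                        & K :&: g @^-1: hull (g @: Z) \subset Z].
Proof.
(* A largest [K] with the three properties below is saturated: by
   [act_mem_closed], [hull (saturation K)] has them as well. *)
move=> ZC; set X := hull (g @: Z).
pose ext (K : {set D}) := [&& K \in closed D, Z \subset K & K :&: g @^-1: X \subset Z].
have extZ : ext Z by rewrite /ext ZC subxx subsetIl.
have [K /and3P [KC ZK KX] Kmax] := arg_maxnP (fun K : {set D} => #|K|) extZ.
set K' := hull (saturation K).
have KK' : K \subset K' := subset_trans (sub_saturation K) (sub_hull _).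
suff /Kmax K'K : ext K'.
  have /eqP KE : K == K' by rewrite eqEcard KK'.
  by exists K; split; rewrite // {2}KE sub_hull.
rewrite /ext hull_closed (subset_trans ZK KK') /=.
apply/subsetP => c; rewrite !inE => /andP [cK' gcX].
apply: (subsetP KX); rewrite !inE gcX andbT -[c]act_dgamma.
apply: act_mem_closed => //; apply: (subsetP _ _ gcX).
exact: hull_min (hull_closed _) (subset_trans (imsetS _ ZK) (sub_hull _)).
Qed.

Hypothesis p_cont : cont p.

Lemma orbit_map_cont : cont orbit_map.
Proof.
move=> Y YB; rewrite inE (_ : _ @^-1: _ = g @^-1: (p @^-1: Y)).
  exact/dgamma_cont/p_cont.
by apply/setP => c; rewrite !inE orbit_map_of.
Qed.

Definition orbit_sobj : sobj B := SObj orbit_map_cont.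

Local Notation P := (pb p orbit_map).
Local Notation pr1 := (@pi1 _ _ p _ orbit_map).
Local Notation pr2 := (@pi2 _ _ p _ orbit_map).

Definition glue (w : P) : D := act (pr1 w) (repr (pr2 w)).

Lemma glue_pb (w : P) : p (pr1 w) = p (g (repr (pr2 w))).
Proof. exact: esym (pbP w). Qed.

Lemma dgamma_glue w : g (glue w) = pr1 w.
Proof. exact: dgamma_act (glue_pb w). Qed.

Lemma orbit_of_glue w : orbit_of (glue w) = pr2 w.
Proof. by rewrite -[RHS]orbit_of_repr; apply/esym/orbit_ofP/dorbit_act/glue_pb. Qed.

Lemma unglue_subproof c : p (g c) == orbit_map (orbit_of c).
Proof. by rewrite orbit_map_of. Qed.

Definition unglue (c : D) : P := exist _ (g c, orbit_of c) (unglue_subproof c).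

Lemma unglueK : cancel unglue glue.
Proof. by move=> c; have /andP [_ /eqP] := dorbit_repr c. Qed.

Lemma glueK : cancel glue unglue.
Proof.
move=> w; apply: val_inj; rewrite /= dgamma_glue orbit_of_glue.
by case: w => [[]].
Qed.

Lemma glue_cont : cont glue.
Proof.
move=> Z ZC; have [K [KC satK ZK KZ]] := saturated_extension ZC.
have -> : glue @^-1: Z = pr1 @^-1: hull (g @: Z) :&: pr2 @^-1: (orbit_of @: K).
  apply/setP => w; rewrite !inE -dgamma_glue -orbit_of_glue.
  apply/idP/andP => [gZ | [gX gK]].
    by split; [apply/(subsetP (sub_hull _))/imset_f | apply/imset_f/(subsetP ZK)].
  by apply: (subsetP KZ); rewrite !inE gX andbT; apply: (subsetP satK); rewrite inE.
apply: pb_rect_closed; first exact: hull_closed.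
rewrite inE; suff -> : orbit_of @^-1: (orbit_of @: K) = K by [].
by apply/eqP; rewrite eqEsubset satK sub_saturation.
Qed.

Lemma unglue_cont : cont unglue.
Proof.
apply: cont_gen => _ /pb_gensP [[X XC ->] | [Y YC ->]].
  rewrite (_ : unglue @^-1: _ = g @^-1: X); first exact: dgamma_cont.
  by apply/setP => c; rewrite !inE.
rewrite (_ : unglue @^-1: _ = orbit_of @^-1: Y); first by rewrite inE in YC.
by apply/setP => c; rewrite !inE.
Qed.

Local Notation KQ := (K0 p orbit_sobj).

Lemma glue_xi z :
  glue (@dxi _ _ p KQ z) = xi (pbmap (qX := p \o @dgamma _ _ p KQ) (qY := p \o g) (f := glue)
                      (fun w => f_equal p (dgamma_glue w)) z).
Proof.
rewrite -actE; case: z => [[e' [[e a] /= ea]] /= e'e].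
by rewrite /glue /= act_act //; apply/eqP.
Qed.

Lemma dgamma_unglue c : @dgamma _ _ p KQ (unglue c) = g c.
Proof. by []. Qed.

Lemma unglue_xi z :
  unglue (xi z) = dxi (pbmap (qX := p \o g) (qY := p \o @dgamma _ _ p KQ) (f := unglue)
                         (fun c => f_equal p (dgamma_unglue c)) z).
Proof.
apply: val_inj; rewrite /= dlaw1; congr pair.
by rewrite -actE; apply/esym/orbit_ofP/dorbit_act/eqP/(valP z).
Qed.

Definition glue_dhom : dhom KQ D := @DHom _ _ p KQ D glue glue_cont dgamma_glue glue_xi.

Definition unglue_dhom : dhom D KQ :=
  @DHom _ _ p D KQ unglue unglue_cont dgamma_unglue unglue_xi.

End DescentDatum.

Section Categories.
Variables (E B : fcls) (p : E -> B).

Definition sid (X : sobj B) : shom X X := @SHom B X X id (@cont_id X) (fun _ => erefl).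

Definition scomp (X Y Z : sobj B) (f : shom Y Z) (h : shom X Y) : shom X Z :=
  @SHom B X Z (f \o h) (cont_comp (shcont f) (shcont h))
    (fun x => etrans (shcomm f (h x)) (shcomm h x)).

Lemma dcomp_gamma (D1 D2 D3 : dobj p) (h : dhom D2 D3) (k : dhom D1 D2) c :
  dgamma (h (k c)) = dgamma c.
Proof. by rewrite !dhgamma. Qed.

Lemma dcomp_xi (D1 D2 D3 : dobj p) (h : dhom D2 D3) (k : dhom D1 D2) z :
  h (k (dxi z)) = dxi (pbmap (qX := p \o @dgamma _ _ p D1) (qY := p \o @dgamma _ _ p D3)
     (f := h \o k) (fun c => f_equal p (dcomp_gamma h k c)) z).
Proof. by rewrite !dhxi; congr dxi; apply: val_inj. Qed.

Definition dcomp (D1 D2 D3 : dobj p) (h : dhom D2 D3) (k : dhom D1 D2) : dhom D1 D3 :=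
  @DHom _ _ p D1 D3 (h \o k) (cont_comp (dhcont h) (dhcont k))
    (dcomp_gamma h k) (dcomp_xi h k).

Lemma K1_id (X : sobj B) : K1 p (sid X) =1 id.
Proof. by case=> [[]] *; apply: val_inj. Qed.

Lemma K1_comp (X Y Z : sobj B) (f : shom Y Z) (h : shom X Y) z :
  K1 p (scomp f h) z = K1 p f (K1 p h z).
Proof. exact: val_inj. Qed.

End Categories.

Section FullyFaithfulEquivalence.
Variables (E B : fcls) (p : E -> B).
Hypothesis Kff : K_fully_faithful p.
Variable G : dobj p -> sobj B.
Variables (counit : forall D, dhom (K0 p (G D)) D) (counit_inv : forall D, dhom D (K0 p (G D))).
Hypotheses (counitK : forall D, cancel (counit D) (counit_inv D))
           (counit_invK : forall D, cancel (counit_inv D) (counit D)).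

Lemma K_faithful (X Y : sobj B) (f f' : shom X Y) : K1 p f =1 K1 p f' -> f =1 f'.
Proof. exact: (proj1 Kff X Y f f'). Qed.

Definition K_preimage (X Y : sobj B) (h : dhom (K0 p X) (K0 p Y)) : shom X Y :=
  proj1_sig (constructive_indefinite_description _ (proj2 Kff X Y h)).

Lemma K1_preimage (X Y : sobj B) (h : dhom (K0 p X) (K0 p Y)) : K1 p (K_preimage h) =1 h.
Proof. exact: proj2_sig (constructive_indefinite_description _ (proj2 Kff X Y h)). Qed.

Definition Gmap (D D' : dobj p) (h : dhom D D') : shom (G D) (G D') :=
  K_preimage (dcomp (counit_inv D') (dcomp h (counit D))).

Lemma K1_Gmap (D D' : dobj p) (h : dhom D D') z :
  K1 p (Gmap h) z = counit_inv D' (h (counit D z)).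
Proof. exact: K1_preimage. Qed.

Definition unit (X : sobj B) : shom X (G (K0 p X)) := K_preimage (counit_inv (K0 p X)).

Definition unit_inv (X : sobj B) : shom (G (K0 p X)) X := K_preimage (counit (K0 p X)).

Lemma K_equivalence_of_ess_surj : K_equivalence p.
Proof.
exists G, Gmap; split; [|split; [|split]].
- move=> D h hid y; apply: (K_faithful (f := Gmap h) (f' := sid _) _ y) => z.
  by rewrite K1_id K1_Gmap hid counitK.
- move=> D1 D2 D3 h k hk hkE y.
  apply: (K_faithful (f := Gmap hk) (f' := scomp (Gmap h) (Gmap k)) _ y) => z.
  by rewrite K1_comp !K1_Gmap counit_invK hkE.
- exists unit, unit_inv; split; [|split].
  + move=> X x; apply: (K_faithful (f := scomp (unit_inv X) (unit X)) (f' := sid X) _ x) => z.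
    by rewrite K1_comp K1_id !K1_preimage counit_invK.
  + move=> X y; apply: (K_faithful (f := scomp (unit X) (unit_inv X)) (f' := sid _) _ y) => z.
    by rewrite K1_comp K1_id !K1_preimage counitK.
  + move=> X Y f x.
    apply: (K_faithful (f := scomp (unit Y) f) (f' := scomp (Gmap (K1 p f)) (unit X)) _ x) => z.
    by rewrite !K1_comp K1_Gmap !K1_preimage counit_invK.
- exists counit, counit_inv; split; [|split] => //.
  by move=> D D' h z; rewrite K1_Gmap counit_invK.
Qed.

End FullyFaithfulEquivalence.

Theorem theorem4p3 (E B : fcls) (p : E -> B) :
  descent_morphism p -> effective_descent_morphism p.
Proof.
case=> p_cont Kff; split=> //.
exact: (K_equivalence_of_ess_surj Kff (counit := fun D => glue_dhom D p_cont)
          (counit_inv := fun D => unglue_dhom D p_cont) (@glueK _ _ p) (@unglueK _ _ p)).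
Qed.
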